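(* Let $G=(V,E,p,(V_{E},V_{O}))$ be a parity game, $v\in V$, and let $\sigma$ be a (history-dependent) strategy of player Odd that is oblivious with respect to odd-dominated cycles, i.e. $\sigma(\lambda\, u\,\lambda'\,u\,\lambda'')=\sigma(\lambda\,u\,\lambda'')$ whenever $u\,\lambda'\,u$ is an odd-dominated cycle. Then $\min_{\pi\in\mathrm{Plays}(\sigma,v)}\theta(\pi)\in\mathbb{M}$.
   Context: A parity game $G=(V,E,p,(V_{E},V_{O}))$: finite $V$ partitioned into $V_{E}$ (Even) and $V_{O}$ (Odd), total edge relation $E$, priorities $p:V\to\mathbb{N}$; $V_i=\{v:p(v)=i\}$. Plays are infinite paths; Even wins iff the least priority occurring infinitely often is even. A strategy of Odd is a partial function $\sigma:V^+\to V$ defined on finite paths ending in $V_{O}$, choosing a successor of the last vertex; $\mathrm{Plays}(\sigma,v)$ is the set of plays starting in $v$ consistent with $\sigma$. An odd-dominated cycle is a path $u\,\lambda'\,u$ (starting and ending at the same vertex) whose minimal priority is odd. Let $d$ be one more than the largest priority. $\mathbb{M}$ consists of $\top$ and all tuples $(m_0,\dots,m_{d-1})\in\mathbb{N}^d$ with $m_i=0$ for even $i$ and $m_i\le|V_i|$ for odd $i$; $\mathbb{M}_{ext}$ consists of $\top$ and all tuples in $\mathbb{N}^d$ that are $0$ at even positions; both are ordered lexicographically with $\top$ maximal. A $k$-dominated stretch is a finite contiguous part of a play whose minimal priority is $k$; its degree is its number of vertices of priority $k$. The value $\theta(\pi)\in\mathbb{M}_{ext}$ of a play $\pi$ is $\top$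 if Odd wins $\pi$, and otherwise the tuple that is $0$ at even positions and, at each odd position $i$, equals the degree of the maximal $i$-dominated stretch that is a prefix of $\pi$ ($0$ if none). *)

From mathcomp Require Import all_boot.
From Stdlib Require Import ClassicalEpsilon.

Set Implicit Arguments.
Unset Strict Implicit.
Unset Printing Implicit Defensive.

Section ParityGame.

(* A parity game: finite vertex set V, edge relation E, priorities p,
   VO = vertices of player Odd (V_E is the complement). *)
Variables (V : finType) (E : rel V) (p : V -> nat) (VO : pred V).

Definition total_edges : Prop := forall v, exists w, E v w.

Definition dd : nat := (\max_(v : V) p v).+1.

Definition is_fpath (s : seq V) : bool :=
  if s is x :: s' then path E x s' else false.

Definition ends_odd (s : seq V) : bool :=
  if s is x :: s' then VO (last x s') else false.

Definition minp (u : V) (l : seq V) : nat := foldr minn (p u) [seq p x | x <- l].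

(* u :: lam' ++ [u] is an odd-dominated cycle (assumed to be a path) *)
Definition odd_dominated_cycle (u : V) (lam' : seq V) : Prop :=
  is_fpath (u :: rcons lam' u) /\ odd (minp u (rcons lam' u)).

(* A strategy of Odd: a function on finite paths; only its values on finite
   paths ending in V_O matter, where it must choose a successor. *)
Definition odd_strategy (sigma : seq V -> V) : Prop :=
  forall s x, is_fpath (rcons s x) -> VO x -> E x (sigma (rcons s x)).

Definition cycle_oblivious (sigma : seq V -> V) : Prop :=
  forall (lam : seq V) (u : V) (lam' lam'' : seq V),
    is_fpath (lam ++ u :: lam' ++ u :: lam'') ->
    ends_odd (lam ++ u :: lam' ++ u :: lam'') ->
    odd_dominated_cycle u lam' ->
    sigma (lam ++ u :: lam' ++ u :: lam'') = sigma (lam ++ u :: lam'').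

Definition is_play (pi : nat -> V) : Prop := forall n, E (pi n) (pi n.+1).

Definition play_of (sigma : seq V -> V) (v : V) (pi : nat -> V) : Prop :=
  pi 0 = v /\ is_play pi /\
  forall n, VO (pi n) -> pi n.+1 = sigma (mkseq pi n.+1).

Definition inf_often (pi : nat -> V) (k : nat) : Prop :=
  forall N, exists n, N <= n /\ p (pi n) = k.

Definition odd_wins (pi : nat -> V) : Prop :=
  exists k, odd k /\ inf_often pi k /\ forall j, j < k -> ~ inf_often pi j.

Definition dominated_prefix (pi : nat -> V) (i n : nat) : Prop :=
  0 < n /\ minp (pi 0) (mkseq pi n) = i.

Definition prefix_degree (pi : nat -> V) (i n : nat) : nat :=
  count (fun x => p x == i) (mkseq pi n).

Definition is_degree (pi : nat -> V) (i k : nat) : Prop :=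
  (exists n, dominated_prefix pi i n /\ prefix_degree pi i n = k /\
     forall m, dominated_prefix pi i m -> prefix_degree pi i m <= k)
  \/ ((forall n, ~ dominated_prefix pi i n) /\ k = 0).

Definition degree (pi : nat -> V) (i : nat) : nat :=
  epsilon (inhabits 0) (is_degree pi i).

(* values in M_ext: None = top, Some m = tuple (m_0, ..., m_(d-1)) *)
Definition mval := option {ffun 'I_dd -> nat}.

Definition theta (pi : nat -> V) : mval :=
  if excluded_middle_informative (odd_wins pi) then None
  else Some [ffun i : 'I_dd => if odd i then degree pi i else 0].

Definition in_M (t : mval) : Prop :=
  match t with
  | None => True
  | Some m => forall i : 'I_dd,
      (~~ odd i -> m i = 0) /\ (odd i -> m i <= #|[set x : V | p x == i]|)
  end.

Definition lex_lt_tuple (a b : {ffun 'I_dd -> nat}) : Prop :=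
  exists i : 'I_dd, a i < b i /\ forall j : 'I_dd, j < i -> a j = b j.

Definition mle (s t : mval) : Prop :=
  match s, t with
  | _, None => True
  | None, Some _ => False
  | Some a, Some b => a = b \/ lex_lt_tuple a b
  end.

End ParityGame.

From mathcomp Require Import all_boot zify.
From Stdlib Require Import ClassicalEpsilon Classical.

Set Implicit Arguments.
Unset Strict Implicit.
Unset Printing Implicit Defensive.

(* Take a play consistent with sigma whose value is lexicographically least
   (the lexicographic order on N^d is a well-order).  If that value is top we
   are done.  Otherwise Even wins the play, and if its i-degree exceeded |V_i|
   for some odd i, some vertex of priority i would repeat inside the maximal
   i-dominated prefix.  The stretch between the two occurrences is an
   odd-dominated cycle, so by obliviousness cutting it out leaves a play that
   is still consistent with sigma; its degrees below i are unchanged and its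
   i-degree is smaller, contradicting minimality. *)

Lemma ex_minn_classic (P : nat -> Prop) n :
  P n -> exists m, P m /\ forall k, P k -> m <= k.
Proof.
elim/ltn_ind: n => n IH Pn.
case: (classic (exists2 m, m < n & P m)) => [[m lt_mn Pm]|no_lt]; first exact: IH Pm.
exists n; split=> // k Pk; rewrite leqNgt; apply/negP => lt_kn.
by apply: no_lt; exists k.
Qed.

Lemma ex_maxn_classic (P : nat -> Prop) n M :
  P n -> (forall k, P k -> k <= M) -> exists m, P m /\ forall k, P k -> k <= m.
Proof.
elim: M n => [|M IH] n Pn leM.
  by exists n; split=> // k /leM; rewrite leqn0 => /eqP ->.
case: (classic (P M.+1)) => [PM1|nPM1]; first by exists M.+1.
apply: (IH n Pn) => k Pk; have := leM k Pk; rewrite leq_eqVlt => /orP [/eqP Ek|//].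
by rewrite Ek in Pk.
Qed.

Section LexMin.

Variable n : nat.
Implicit Types a b : {ffun 'I_n -> nat}.

Definition lex_lt a b :=
  exists i : 'I_n, a i < b i /\ forall j : 'I_n, j < i -> a j = b j.

Lemma lex_lt_irr a : ~ lex_lt a a.
Proof. by case=> i []; rewrite ltnn. Qed.

Lemma lex_lt_asym a b : lex_lt a b -> ~ lex_lt b a.
Proof.
move=> [i [ltab eqab]] [j [ltba eqba]].
case: (ltngtP i j) => [lt_ij|lt_ji|/val_inj eq_ij].
- by move: ltab; rewrite eqba // ltnn.
- by move: ltba; rewrite eqab // ltnn.
- by subst j; move: ltab; rewrite ltnNge ltnW.
Qed.

Lemma lex_min_below (P : {ffun 'I_n -> nat} -> Prop) a0 k : P a0 -> k <= n ->
  exists a, P a /\ forall b, P b ->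
    (forall j : 'I_n, j < k -> a j = b j) \/
    exists i : 'I_n, [/\ i < k, a i < b i & forall j : 'I_n, j < i -> a j = b j].
Proof.
move=> Pa0; elim: k => [|k IH] lt_kn; first by exists a0; split=> // b _; left.
have [a [Pa mina]] := IH (ltnW lt_kn).
pose k' := Ordinal lt_kn.
(* minimise the k-th coordinate among the tuples agreeing with a below k *)
have [m [[c [Pc eq_ac ck]] minm]] := ex_minn_classic
  (P := fun m => exists c, [/\ P c, forall j : 'I_n, j < k -> a j = c j & c k' = m])
  (ex_intro _ a (And3 Pa (fun _ _ => erefl) erefl)).
exists c; split=> // b Pb.
case: (mina b Pb) => [eq_ab|[i [lt_ik ltab eqab]]]; last first.
  right; exists i; split; [lia | by rewrite -eq_ac | move=> j lt_ji].
  by rewrite -eq_ac ?eqab //; lia.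
have le_mb : m <= b k' by apply: minm; exists b; split.
case: (ltngtP (c k') (b k')) => [ltcb|ltbc|eqcb]; last 2 first.
- by move: ltbc; rewrite ck ltnNge le_mb.
- left=> j; rewrite ltnS leq_eqVlt => /orP [/eqP Ej|lt_jk].
    by have -> : j = k' by apply: val_inj.
  by rewrite -eq_ac // eq_ab.
by right; exists k'; split=> // j lt_jk; rewrite -eq_ac // eq_ab.
Qed.

Lemma lex_min (P : {ffun 'I_n -> nat} -> Prop) a0 :
  P a0 -> exists a, P a /\ forall b, P b -> a = b \/ lex_lt a b.
Proof.
move=> Pa0; have [a [Pa mina]] := lex_min_below Pa0 (leqnn n).
exists a; split=> // b Pb; case: (mina b Pb) => [eq_ab|[i [_ ltab eqab]]].
  by left; apply/ffunP => j; apply: eq_ab.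
by right; exists i.
Qed.

End LexMin.

Lemma mkseqD (T : Type) (f : nat -> T) m n :
  mkseq f (m + n) = mkseq f m ++ map f (iota m n).
Proof. by rewrite /mkseq iotaD map_cat. Qed.

Lemma iota_rcons m n : iota m n.+1 = rcons (iota m n) (m + n).
Proof. by rewrite -addn1 iotaD cats1. Qed.

Lemma last_mkseq (T : Type) x0 (f : nat -> T) n : last x0 (mkseq f n.+1) = f n.
Proof. by rewrite mkseqS last_rcons. Qed.

Section Cut.

Variables (T : Type) (pi : nat -> T) (a L : nat).

Definition cut n := if n < a then pi n else pi (n + L).

Lemma cut_lt n : n < a -> cut n = pi n.
Proof. by rewrite /cut => ->. Qed.

Lemma cut_ge n : a <= n -> cut n = pi (n + L).
Proof. by rewrite /cut ltnNge => ->. Qed.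

Lemma all_cut (P : T -> Prop) n : a <= n ->
  (forall m, m < n + L -> P (pi m)) <->
  (forall m, m < n -> P (cut m)) /\ (forall m, a <= m < a + L -> P (pi m)).
Proof.
move=> le_an; split=> [Ppi|[Pcut Pcyc] m lt_m].
  split=> [m lt_mn|m /andP [_ lt_m]]; last by apply: Ppi; lia.
  by case: (ltnP m a) => [/cut_lt|/cut_ge] ->; apply: Ppi; lia.
case: (ltnP m a) => [lt_ma|le_am]; first by rewrite -cut_lt //; apply: Pcut; lia.
case: (ltnP m (a + L)) => [lt_m'|le_m]; first by apply: Pcyc; rewrite le_am.
by rewrite -(subnK (leq_trans (leq_addl a L) le_m)) -cut_ge; [apply: Pcut|]; lia.
Qed.

Lemma has_cut (P : T -> Prop) n : a <= n ->
  (exists2 m, m < n + L & P (pi m)) <->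
  (exists2 m, m < n & P (cut m)) \/ (exists2 m, a <= m < a + L & P (pi m)).
Proof.
move=> le_an; split=> [[m lt_m Pm]|[[m lt_mn]|[m /andP [le_am lt_m] Pm]]].
- case: (ltnP m a) => [lt_ma|le_am].
    by left; exists m; [lia | rewrite cut_lt].
  case: (ltnP m (a + L)) => [lt_m'|le_m]; first by right; exists m; rewrite ?le_am.
  left; exists (m - L); first lia.
  by rewrite cut_ge ?subnK //; lia.
- case: (ltnP m a) => [/cut_lt ->|/cut_ge ->] Pm.
    by exists m => //; lia.
  by exists (m + L) => //; lia.
- by exists m => //; lia.
Qed.

Lemma count_cut (f : pred T) n : a <= n ->
  count (fun m => f (pi m)) (iota 0 (n + L)) =
  count (fun m => f (cut m)) (iota 0 n) + count (fun m => f (pi m)) (iota a L).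
Proof.
move=> le_an; have -> : n + L = a + (L + (n - a)) by lia.
rewrite -{2}(subnKC le_an) !iotaD !count_cat add0n.
have -> : count (fun m => f (cut m)) (iota 0 a) = count (fun m => f (pi m)) (iota 0 a).
  by apply: eq_in_count => m; rewrite mem_iota add0n /= => /cut_lt ->.
have -> : count (fun m => f (cut m)) (iota a (n - a)) =
          count (fun m => f (pi m)) (iota (a + L) (n - a)).
  rewrite [a + L]addnC iotaDl count_map; apply: eq_in_count => m.
  by rewrite mem_iota /= => /andP [/cut_ge -> _]; rewrite addnC.
by rewrite addnA addnAC.
Qed.

Lemma mkseq_cut k : mkseq cut (a + k) = mkseq pi a ++ map pi (iota (a + L) k).
Proof.
rewrite mkseqD; congr (_ ++ _).
  by apply/eq_in_map => m; rewrite mem_iota add0n => /cut_lt.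
rewrite [a + L]addnC iotaDl -map_comp; apply/eq_in_map => m.
by rewrite mem_iota /= => /andP [/cut_ge -> _]; rewrite addnC.
Qed.

End Cut.

Section Priorities.

Variables (V : finType) (p : V -> nat).
Implicit Types (pi : nat -> V) (u : V) (l : seq V).

Lemma leq_minp k u l : (k <= minp p u l) = (k <= p u) && all (fun x => k <= p x) l.
Proof.
elim: l => [|x l IH]; first by rewrite /minp /= andbT.
by rewrite /minp /= leq_min -/(minp p u l) IH andbCA.
Qed.

Lemma minp_mem u l : has (fun x => p x == minp p u l) (u :: l).
Proof.
elim: l => [|x l IH]; first by rewrite /= eqxx.
rewrite /minp /= -/(minp p u l) /minn; case: ltnP => _; first by rewrite eqxx orbT.
by move: IH => /= /orP [->|->]; rewrite ?orbT.
Qed.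

Lemma minp_id u l : all (fun x => p u <= p x) l -> minp p u l = p u.
Proof.
move=> ge_u; apply/eqP; rewrite eqn_leq [p u <= _]leq_minp leqnn ge_u andbT.
by have := leqnn (minp p u l); rewrite andbT leq_minp => /andP [].
Qed.

Lemma dominated_prefixP pi i n :
  dominated_prefix p pi i n <->
  [/\ 0 < n, forall m, m < n -> i <= p (pi m) & exists2 m, m < n & p (pi m) = i].
Proof.
have in_prefix m : m < n -> pi m \in mkseq pi n.
  by move=> lt_mn; apply: map_f; rewrite mem_iota.
have prefixP x : x \in mkseq pi n -> exists2 m, m < n & x = pi m.
  by move=> /mapP [m]; rewrite mem_iota => /andP [_ lt_mn] ->; exists m.
rewrite /dominated_prefix; split.
  move=> [n_gt0 min_i]; split=> //.
    move=> m lt_mn; have := leqnn i; rewrite -{2}min_i leq_minp.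
    by move=> /andP [_ /allP ge_i]; apply/ge_i/in_prefix.
  move: (minp_mem (pi 0) (mkseq pi n)); rewrite min_i /=.
  case/orP=> [/eqP ?|]; first by exists 0.
  by move=> /hasP [x /prefixP [m lt_mn ->] /eqP]; exists m.
move=> [n_gt0 ge_i [m lt_mn pm]]; split=> //; apply/eqP; rewrite eqn_leq.
rewrite leq_minp ge_i //=; apply/andP; split; last first.
  by apply/allP => x /prefixP [m' lt_m'n ->]; apply: ge_i.
have := leqnn (minp p (pi 0) (mkseq pi n)); rewrite leq_minp => /andP [_ /allP le_min].
by rewrite -pm; apply: le_min; apply: in_prefix.
Qed.

Lemma prefix_degreeE pi i n :
  prefix_degree p pi i n = count (fun m => p (pi m) == i) (iota 0 n).
Proof. by rewrite /prefix_degree /mkseq count_map. Qed.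

Lemma prefix_degreeS pi i n :
  prefix_degree p pi i n.+1 = prefix_degree p pi i n + (p (pi n) == i).
Proof. by rewrite /prefix_degree mkseqS -cats1 count_cat /= addn0. Qed.

Lemma prefix_degree_leq pi i n : prefix_degree p pi i n <= n.
Proof. by rewrite prefix_degreeE (leq_trans (count_size _ _)) ?size_iota. Qed.

Lemma prefix_degree_mono pi i : {homo prefix_degree p pi i : m n / m <= n}.
Proof.
by move=> m n le_mn; rewrite !prefix_degreeE -(subnKC le_mn) iotaD count_cat leq_addr.
Qed.

Lemma eq_prefix_degree pi pi' i n : (forall m, m < n -> pi' m = pi m) ->
  prefix_degree p pi' i n = prefix_degree p pi i n.
Proof.
move=> eq_pi; rewrite !prefix_degreeE; apply: eq_in_count => m.
by rewrite mem_iota add0n /= => /eq_pi ->.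
Qed.

Lemma prefix_degree_repeat pi i N : #|[set x | p x == i]| < prefix_degree p pi i N ->
  exists a b, [/\ a < b < N, p (pi a) = i & pi a = pi b].
Proof.
move=> big; apply: NNPP => no_repeat.
set s := [seq m <- iota 0 N | p (pi m) == i].
have inj_pi : {in s &, injective pi}.
  move=> m1 m2; rewrite !mem_filter !mem_iota add0n /=.
  move=> /andP [/eqP pm1 lt1] /andP [/eqP pm2 lt2] eq_pi.
  case: (ltngtP m1 m2) => // [lt12|lt21]; case: no_repeat.
    by exists m1, m2; split; rewrite ?lt12 ?lt2.
  by exists m2, m1; split; rewrite ?lt21 ?lt1.
have : size (map pi s) <= #|[set x | p x == i]|.
  rewrite cardE; apply: uniq_leq_size.
    by rewrite (map_inj_in_uniq inj_pi) filter_uniq // iota_uniq.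
  by move=> x /mapP [m]; rewrite mem_filter mem_enum inE => /andP [pm _] ->.
by rewrite size_map size_filter -prefix_degreeE leqNgt big.
Qed.

Lemma is_degree_uniq pi i k1 k2 :
  is_degree p pi i k1 -> is_degree p pi i k2 -> k1 = k2.
Proof.
move=> [[n1 [dom1 [<- max1]]]|[none1 ->]] [[n2 [dom2 [<- max2]]]|[none2 ->]] //.
- by apply/eqP; rewrite eqn_leq max1 ?max2.
- by case: (none2 n1).
- by case: (none1 n2).
Qed.

Lemma odd_wins_least_priority pi i : odd i -> inf_often p pi i ->
  (forall n, i <= p (pi n)) -> odd_wins p pi.
Proof.
move=> odd_i inf_i ge_i; exists i; do 2!split=> //; move=> j lt_ji /(_ 0) [n [_ pn]].
by move: (ge_i n); rewrite pn leqNgt lt_ji.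
Qed.

(* Even wins, so the degrees of the [i]-dominated prefixes are bounded:
   otherwise [i] recurs forever and nothing smaller ever occurs. *)
Lemma is_degree_exists pi i : odd i -> ~ odd_wins p pi -> exists k, is_degree p pi i k.
Proof.
move=> odd_i even_wins.
case: (classic (exists n, dominated_prefix p pi i n)) => [[n0 dom0]|none]; last first.
  by exists 0; right; split=> // n dom; apply: none; exists n.
pose P k := exists n, dominated_prefix p pi i n /\ prefix_degree p pi i n = k.
case: (classic (exists M, forall k, P k -> k <= M)) => [[M leM]|unbounded].
  have [k [[n [dom deg]] maxk]] :=
    ex_maxn_classic (ex_intro _ n0 (conj dom0 erefl)) leM.
  by exists k; left; exists n; do 2!split=> //; move=> m dom_m; apply: maxk; exists m.
have large M : exists n, dominated_prefix p pi i n /\ M < prefix_degree p pi i n.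
  apply: NNPP => none_large; apply: unbounded; exists M => _ [n [dom <-]].
  by rewrite leqNgt; apply/negP => gtM; apply: none_large; exists n.
case: even_wins; apply: (odd_wins_least_priority odd_i) => [N|m].
  have [n [_ gtN]] := large N.
  have le_Nn : N <= n by apply: leq_trans (prefix_degree_leq pi i n); apply: ltnW.
  move: gtN; rewrite !prefix_degreeE -(subnKC le_Nn) iotaD count_cat add0n.
  have := count_size (fun m => p (pi m) == i) (iota 0 N); rewrite size_iota.
  move=> leN gtN; have : 0 < count (fun m => p (pi m) == i) (iota N (n - N)) by lia.
  rewrite -has_count => /hasP [m]; rewrite mem_iota => /andP [le_Nm _] /eqP pm.
  by exists m.
have [n [/dominated_prefixP [_ ge_i _] gt_m]] := large m.
by apply: ge_i; apply: leq_trans (prefix_degree_leq pi i n).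
Qed.

Lemma degreeP pi i : odd i -> ~ odd_wins p pi -> is_degree p pi i (degree p pi i).
Proof. by move=> odd_i even_wins; apply: epsilon_spec; apply: is_degree_exists. Qed.

Lemma is_degree_shift pi pi' i L k :
  (forall n, dominated_prefix p pi' i n <-> dominated_prefix p pi i (n + L)) ->
  (forall m, dominated_prefix p pi i m -> L <= m) ->
  (forall n, dominated_prefix p pi' i n ->
     prefix_degree p pi i (n + L) = prefix_degree p pi' i n) ->
  is_degree p pi' i k -> is_degree p pi i k.
Proof.
move=> domE ge_L degE [[n [dom [<- maxn]]]|[none ->]].
  left; exists (n + L); split; first exact/domE.
  split=> [|m dom_m]; first exact: degE.
  have dom' : dominated_prefix p pi' i (m - L) by apply/domE; rewrite subnK ?ge_L.
  by rewrite -(subnK (ge_L m dom_m)) degE ?maxn.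
right; split=> // m dom_m; apply: (none (m - L)); apply/domE.
by rewrite subnK ?ge_L.
Qed.

Lemma inf_often_cut pi a L k : inf_often p (cut pi a L) k <-> inf_often p pi k.
Proof.
split=> inf N.
  have [n [le_n pn]] := inf (N + a); exists (n + L); split; first lia.
  by rewrite -pn cut_ge //; lia.
have [n [le_n pn]] := inf (N + a + L); exists (n - L); split; first lia.
by rewrite cut_ge ?subnK //; lia.
Qed.

Lemma odd_wins_cut pi a L : odd_wins p (cut pi a L) <-> odd_wins p pi.
Proof.
split=> -[k [odd_k [inf_k least_k]]]; exists k; do 2!split=> //.
- exact/inf_often_cut.
- by move=> j lt_jk /(inf_often_cut pi a L); apply: least_k.
- exact/(inf_often_cut pi a L).
- by move=> j lt_jk /inf_often_cut; apply: least_k.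
Qed.

Lemma theta_even pi : ~ odd_wins p pi ->
  theta p pi = Some [ffun i : 'I_(dd p) => if odd i then degree p pi i else 0].
Proof. by rewrite /theta; case: excluded_middle_informative. Qed.

Lemma theta_odd pi : odd_wins p pi -> theta p pi = None.
Proof. by rewrite /theta; case: excluded_middle_informative. Qed.

End Priorities.

(* In use, [N] is the length of the maximal [i]-dominated prefix of [pi] and
   [pi (a + L) = pi a], so that [cut pi a L] removes a cycle from it. *)
Section CycleRemoval.

Variables (V : finType) (p : V -> nat) (pi : nat -> V) (i a L N : nat).
Hypotheses (L_gt0 : 0 < L) (aL_lt_N : a + L < N) (p_a : p (pi a) = i)
  (ge_i : forall m, m < N -> i <= p (pi m)).

Lemma lt_i_ge_N m j : p (pi m) = j -> j < i -> N <= m.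
Proof. by move=> <-; case: (ltnP m N) => // /ge_i; rewrite leqNgt => /negbTE ->. Qed.

Lemma count_cycle_lt j : j < i -> count (fun m => p (pi m) == j) (iota a L) = 0.
Proof.
move=> lt_ji; apply/eqP; rewrite -leqn0 leqNgt -has_count; apply/hasPn => m.
rewrite mem_iota => /andP [_ lt_m]; apply/eqP => pm.
by have := lt_i_ge_N pm lt_ji; lia.
Qed.

Lemma count_cycle_gt0 : 0 < count (fun m => p (pi m) == i) (iota a L).
Proof.
rewrite -has_count; apply/hasP; exists a; last exact/eqP.
by rewrite mem_iota leqnn -{1}(addn0 a) ltn_add2l.
Qed.

Lemma prefix_degree_cut j n : a <= n ->
  prefix_degree p pi j (n + L) =
  prefix_degree p (cut pi a L) j n + count (fun m => p (pi m) == j) (iota a L).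
Proof.
by move=> le_an; rewrite !prefix_degreeE (count_cut pi L (fun x => p x == j) le_an).
Qed.

Lemma dominated_prefix_cut j n : j <= i -> a <= n ->
  dominated_prefix p (cut pi a L) j n -> dominated_prefix p pi j (n + L).
Proof.
move=> le_ji le_an /dominated_prefixP [n_gt0 ge_j ex_j].
apply/dominated_prefixP; split; first lia.
  apply/(all_cut pi L (fun x => j <= p x) le_an); split=> // m /andP [_ lt_m].
  by apply: leq_trans le_ji (ge_i _); lia.
by apply/(has_cut pi L (fun x => p x = j) le_an); left.
Qed.

Lemma dominated_prefix_ge j n : j < i -> dominated_prefix p pi j (n + L) -> a < n.
Proof.
move=> lt_ji /dominated_prefixP [_ _ [m lt_m pm]].
by have := lt_i_ge_N pm lt_ji; lia.
Qed.

Lemma dominated_prefix_cutE j n : j < i ->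
  dominated_prefix p (cut pi a L) j n <-> dominated_prefix p pi j (n + L).
Proof.
move=> lt_ji; split=> [dom|dom].
  suff le_an : a <= n by apply: dominated_prefix_cut (ltnW lt_ji) le_an dom.
  move: dom => /dominated_prefixP [_ _ [m lt_mn]].
  case: (ltnP m a) => [lt_ma|]; last by move=> le_am _; lia.
  by rewrite cut_lt // => pm; have := lt_i_ge_N pm lt_ji; lia.
have lt_an := dominated_prefix_ge lt_ji dom; have le_an := ltnW lt_an.
move: dom => /dominated_prefixP [n_gt0 ge_j ex_j].
apply/dominated_prefixP; split; first lia.
  by move: ge_j => /(all_cut pi L (fun x => j <= p x) le_an) [].
move: ex_j => /(has_cut pi L (fun x => p x = j) le_an) [//|[m /andP [_ lt_m] pm]].
by have := lt_i_ge_N pm lt_ji; lia.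
Qed.

Lemma degree_cut_lt j : odd j -> j < i -> ~ odd_wins p pi ->
  degree p (cut pi a L) j = degree p pi j.
Proof.
move=> odd_j lt_ji even_wins.
have even_wins' : ~ odd_wins p (cut pi a L) by move/odd_wins_cut.
apply: is_degree_uniq (degreeP odd_j even_wins).
apply: (is_degree_shift (pi' := cut pi a L) (L := L)) (degreeP odd_j even_wins').
- by move=> n; apply: dominated_prefix_cutE.
- move=> m /dominated_prefixP [_ _ [m0 lt_m0 pm0]].
  by have := lt_i_ge_N pm0 lt_ji; lia.
- move=> n /(dominated_prefix_cutE _ lt_ji) /(dominated_prefix_ge lt_ji) /ltnW le_an.
  by rewrite prefix_degree_cut // count_cycle_lt ?addn0.
Qed.

Lemma degree_cut_i : odd i -> ~ odd_wins p pi ->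
  (forall m, dominated_prefix p pi i m ->
     prefix_degree p pi i m <= prefix_degree p pi i N) ->
  degree p (cut pi a L) i < prefix_degree p pi i N.
Proof.
move=> odd_i even_wins maxN.
have even_wins' : ~ odd_wins p (cut pi a L) by move/odd_wins_cut.
have lt_a_N : prefix_degree p pi i a < prefix_degree p pi i N.
  have le_aN : a.+1 <= N by lia.
  apply: leq_trans (prefix_degree_mono p pi i le_aN).
  by rewrite prefix_degreeS p_a eqxx addn1.
case: (degreeP odd_i even_wins') => [[n [dom [<- _]]]|[_ ->]]; last by lia.
case: (ltnP n a) => [lt_na|le_an].
  have -> : prefix_degree p (cut pi a L) i n = prefix_degree p pi i n.
    by apply: eq_prefix_degree => m lt_mn; rewrite cut_lt //; lia.
  exact: leq_ltn_trans (prefix_degree_mono p pi i (ltnW lt_na)) lt_a_N.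
have := maxN _ (dominated_prefix_cut (leqnn i) le_an dom).
by rewrite prefix_degree_cut //; have := count_cycle_gt0; lia.
Qed.

End CycleRemoval.

Section Plays.

Variables (V : finType) (E : rel V) (p : V -> nat) (VO : pred V) (sigma : seq V -> V).
Implicit Types (pi : nat -> V).

Lemma is_fpath_play pi s n : is_play E pi -> is_fpath E (map pi (iota s n.+1)).
Proof. by move=> play_pi; elim: n s => [|n IH] s //=; rewrite play_pi; apply: IH. Qed.

Lemma ends_odd_mkseq pi n : ends_odd VO (mkseq pi n.+1) = VO (pi n).
Proof. by rewrite mkseqS; case: (mkseq pi n) => [|x s] //=; rewrite last_rcons. Qed.

Lemma odd_dominated_cycle_play pi a L : is_play E pi -> 0 < L -> pi (a + L) = pi a ->
  odd (p (pi a)) -> (forall m, a < m <= a + L -> p (pi a) <= p (pi m)) ->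
  odd_dominated_cycle E p (pi a) (map pi (iota a.+1 L.-1)).
Proof.
move=> play_pi L_gt0 closed odd_a ge_a; rewrite /odd_dominated_cycle.
have -> : rcons (map pi (iota a.+1 L.-1)) (pi a) = map pi (iota a.+1 L).
  rewrite -closed -map_rcons; congr map.
  by case: L L_gt0 {closed ge_a} => // L' _; rewrite iota_rcons addSnnS.
split; first exact: (is_fpath_play a L play_pi).
rewrite minp_id //; apply/allP => x /mapP [m]; rewrite mem_iota => le_m ->.
by apply: ge_a; lia.
Qed.

Lemma is_fpath_mkseqS pi n :
  is_fpath E (mkseq pi n.+2) = is_fpath E (mkseq pi n.+1) && E (pi n) (pi n.+1).
Proof. by rewrite mkseqS {1}/mkseq /= rcons_path -(last_mkseq (pi 0) pi n). Qed.

Lemma play_of_cut v pi a L : cycle_oblivious E p VO sigma -> play_of E VO sigma v pi ->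
  0 < L -> pi (a + L) = pi a -> odd (p (pi a)) ->
  (forall m, a < m <= a + L -> p (pi a) <= p (pi m)) ->
  play_of E VO sigma v (cut pi a L).
Proof.
move=> oblivious [pi0 [play_pi consistent]] L_gt0 closed odd_a ge_a.
have cut_le n : n <= a -> cut pi a L n = pi n.
  rewrite leq_eqVlt => /orP [/eqP ->|/cut_lt //].
  by rewrite (cut_ge pi L (leqnn a)).
split; first by rewrite cut_le.
split=> n.
  case: (ltnP n a) => [lt_na|le_an]; first by rewrite !cut_le // ltnW.
  by rewrite (cut_ge pi L le_an) (cut_ge pi L (leqW le_an)) addSn.
case: (ltnP n a) => [lt_na|le_an] VOn.
  rewrite (cut_le n (ltnW lt_na)) in VOn; rewrite (cut_le n.+1 lt_na) consistent //.
  congr sigma; apply/eq_in_map => m; rewrite mem_iota add0n /= => lt_m.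
  by rewrite cut_le //; lia.
rewrite (cut_ge pi L le_an) in VOn.
rewrite (cut_ge pi L (leqW le_an)) addSn consistent //.
(* the history in [pi] is that in [cut pi a L] with a cycle at [pi a] inserted *)
set lam'' := map pi (iota (a + L).+1 (n - a)).
have tail : map pi (iota (a + L) (n - a).+1) = pi a :: lam'' by rewrite /= closed.
have def_cut : mkseq (cut pi a L) n.+1 = mkseq pi a ++ pi a :: lam''.
  by rewrite -tail -mkseq_cut; congr mkseq; lia.
have def_pi : mkseq pi (n + L).+1 =
    mkseq pi a ++ pi a :: map pi (iota a.+1 L.-1) ++ pi a :: lam''.
  have -> : (n + L).+1 = a + (L + (n - a).+1) by lia.
  by rewrite mkseqD iotaD map_cat tail -{1}(prednK L_gt0).
rewrite def_pi oblivious -?def_pi ?def_cut //.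
- exact: (is_fpath_play 0 (n + L) play_pi).
- by rewrite ends_odd_mkseq.
- exact: odd_dominated_cycle_play.
Qed.

Definition next_vertex v (s : seq V) : V :=
  let x := last v s in if VO x then sigma s else epsilon (inhabits x) (E x).

Fixpoint play_prefix v n : seq V :=
  if n is n'.+1 then rcons (play_prefix v n') (next_vertex v (play_prefix v n'))
  else [:: v].

Lemma play_of_exists v : total_edges E -> odd_strategy E VO sigma ->
  exists pi, play_of E VO sigma v pi.
Proof.
move=> total strategy; pose pi n := last v (play_prefix v n).
have prefixE n : play_prefix v n = mkseq pi n.+1.
  by elim: n => [|n IH] //; rewrite mkseqS -IH /= /pi /= last_rcons.
have piS n : pi n.+1 = next_vertex v (mkseq pi n.+1).
  by rewrite /pi /= last_rcons -prefixE.
have edge n : is_fpath E (mkseq pi n.+1) -> E (pi n) (pi n.+1).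
  rewrite piS /next_vertex last_mkseq; case: ifP => [VOn|_ _].
    by rewrite mkseqS => fp; apply: strategy.
  exact: epsilon_spec (total (pi n)).
have fpath n : is_fpath E (mkseq pi n.+1).
  by elim: n => [|n IH] //; rewrite is_fpath_mkseqS IH edge.
exists pi; split=> //; split=> [n|n VOn]; first exact/edge/fpath.
by rewrite piS /next_vertex last_mkseq VOn.
Qed.

Lemma exists_play_lower_degree v pi i :
  cycle_oblivious E p VO sigma -> play_of E VO sigma v pi -> ~ odd_wins p pi -> odd i ->
  #|[set x | p x == i]| < degree p pi i ->
  exists pi', [/\ play_of E VO sigma v pi', ~ odd_wins p pi',
    degree p pi' i < degree p pi i &
    forall j, odd j -> j < i -> degree p pi' j = degree p pi j].
Proof.
move=> oblivious play_pi even_wins odd_i.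
case: (degreeP odd_i even_wins) => [[N [domN [<- maxN]]]|[_ ->]] // big.
have [a [b [/andP [lt_ab lt_bN] p_a eq_ab]]] := prefix_degree_repeat big.
move: domN => /dominated_prefixP [_ ge_i _].
set L := b - a.
have L_gt0 : 0 < L by rewrite subn_gt0.
have def_b : a + L = b by rewrite subnKC // ltnW.
have aL_lt_N : a + L < N by rewrite def_b.
have closed : pi (a + L) = pi a by rewrite def_b.
exists (cut pi a L); split.
- apply: (play_of_cut oblivious play_pi L_gt0 closed); first by rewrite p_a.
  by move=> m /andP [_ le_m]; rewrite p_a ge_i //; lia.
- by move/odd_wins_cut/even_wins.
- exact: degree_cut_i.
- by move=> j odd_j lt_ji; apply: (degree_cut_lt L_gt0 aL_lt_N p_a ge_i).
Qed.

End Plays.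

Theorem lemma3 (V : finType) (E : rel V) (p : V -> nat) (VO : pred V)
    (sigma : seq V -> V) (v : V) :
  total_edges E ->
  odd_strategy E VO sigma ->
  cycle_oblivious E p VO sigma ->
  exists pi : nat -> V,
    play_of E VO sigma v pi /\
    (forall pi' : nat -> V, play_of E VO sigma v pi' ->
       mle (theta p pi) (theta p pi')) /\
    in_M (theta p pi).
Proof.
move=> total strategy oblivious.
pose P t := exists2 pi, play_of E VO sigma v pi & theta p pi = Some t.
case: (classic (exists t, P t)) => [[t0 Pt0]|all_odd]; last first.
  have top pi : play_of E VO sigma v pi -> theta p pi = None.
    by case def_t: (theta p pi) => [t|] // play_pi; case: all_odd; exists t, pi.
  have [pi0 play_pi0] := play_of_exists v total strategy.
  by exists pi0; rewrite top //; split=> //; split=> // pi' /top ->.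
have [t [[pi play_pi def_t] min_t]] := lex_min Pt0.
exists pi; split=> //; split=> [pi' play_pi'|].
  by rewrite def_t; case def_t': (theta p pi') => [t'|] //; apply: min_t; exists pi'.
have even_wins : ~ odd_wins p pi by move/theta_odd; rewrite def_t.
move: def_t; rewrite theta_even // => -[def_t] i.
rewrite ffunE; split=> [/negbTE -> //|odd_i].
rewrite odd_i leqNgt; apply/negP => big.
have [pi' [play_pi' even_wins' lt_i eq_lt]] :=
  exists_play_lower_degree oblivious play_pi even_wins odd_i big.
have lt_t : lex_lt [ffun j : 'I_(dd p) => if odd j then degree p pi' j else 0] t.
  exists i; rewrite -def_t !ffunE odd_i; split=> // j lt_ji; rewrite !ffunE.
  by case: ifP => // odd_j; apply: eq_lt.
have [eq_t|gt_t] := min_t _ (ex_intro2 _ _ pi' play_pi' (theta_even even_wins')).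
- by rewrite -eq_t in lt_t; apply: lex_lt_irr lt_t.
- exact: lex_lt_asym lt_t gt_t.
Qed.
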